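(* Let $\mathbb{Y}$ and $\mathbb{T}$ be sets and let $\underline{\mathsf{P}}_{Y,\Theta}$ be a coherent lower prevision on the linear space $\mathfrak{F}$ of bounded real-valued functions (gambles) on $\mathbb{Y}\times\mathbb{T}$. Suppose $\underline{\mathsf{P}}_{Y,\Theta}$ is $\mathscr{B}$-conglomerable, where $\mathscr{B}=\{B_y=\{y\}\times\mathbb{T}: y\in\mathbb{Y}\}$. Let $\{\underline{\Gamma}_y: y\in\mathbb{Y}\}$ be the generalized Bayes IM (defined in the context). Let $y\mapsto(\underline{\Pi}_y,\overline{\Pi}_y)$ be an inferential model such that $\underline{\Pi}_y\le\underline{\Gamma}_y$ for every $y\in\mathbb{Y}$. Then this IM is invulnerable, i.e., for every $H\subseteq\mathbb{T}$ and every $\beta\in[0,1]$, the gamble $$f^{H,\beta}(y,\theta)=\{1(\theta\in H)-\beta\}\,1\{\underline{\Pi}_y(H)>\beta\},\qquad (y,\theta)\in\mathbb{Y}\times\mathbb{T},$$ satisfies $\underline{\mathsf{P}}_{Y,\Theta}(f^{H,\beta})\ge 0$.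
   Context: A lower prevision $\underline{\mathsf{P}}$ on a linear space $\mathfrak{F}$ of bounded gambles on a set $\Omega$ is coherent if for all integers $m,K\ge0$ and all $f_0,\dots,f_K\in\mathfrak{F}$, $\sup_{\omega}\bigl[\sum_{k=1}^K\{f_k(\omega)-\underline{\mathsf{P}}(f_k)\}-m\{f_0(\omega)-\underline{\mathsf{P}}(f_0)\}\bigr]\ge0$; its conjugate upper prevision is $\overline{\mathsf{P}}(f)=-\underline{\mathsf{P}}(-f)$, and for a set $B$ one writes $\underline{\mathsf{P}}(B)=\underline{\mathsf{P}}(1_B)$. $\underline{\mathsf{P}}_{Y,\Theta}$ is $\mathscr{B}$-conglomerable if for every gamble $f$ and every countable collection $\{B_{y_k}\}$ of distinct sets from $\mathscr{B}$, if $\underline{\mathsf{P}}_{Y,\Theta}(1_{B_{y_k}}f)>0$ for all $k$, then $\underline{\mathsf{P}}_{Y,\Theta}(1_{\bigcup_kB_{y_k}}f)\ge0$. An inferential model (IM) is a map $y\mapsto(\underline{\Pi}_y,\overline{\Pi}_y)$ assigning to each $y\in\mathbb{Y}$ a coherent lower prevision $\underline{\Pi}_y$ (with conjugate upper prevision $\overline{\Pi}_y$) on the bounded gambles $f_y(\theta)=f(y,\theta)$ on $\mathbb{T}$; for $H\subseteq\mathbb{T}$, $\underline{\Pi}_y(H)=\underline{\Pi}_y(1_H)$. The generalized Bayes IM is defined, for each $y$ and $f\in\mathfrak{F}$, by: if $\underline{\mathsf{P}}_{Y,\Theta}(\{y\}\times\mathbb{T})=0$, then $\underline{\Gamma}_y(f_y)=\inf_{\theta\in\mathbb{T}}f(y,\theta)$;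 if $\underline{\mathsf{P}}_{Y,\Theta}(\{y\}\times\mathbb{T})>0$, then $\underline{\Gamma}_y(f_y)=\min\{\mathsf{P}(f\,1_{\{y\}\times\mathbb{T}})/\mathsf{P}(1_{\{y\}\times\mathbb{T}}):\mathsf{P}\in\mathscr{C}(\underline{\mathsf{P}}_{Y,\Theta})\}$, where $\mathscr{C}(\underline{\mathsf{P}}_{Y,\Theta})$ is the set of all linear previsions (finitely additive expectations) $\mathsf{P}$ on $\mathfrak{F}$ with $\mathsf{P}\ge\underline{\mathsf{P}}_{Y,\Theta}$ pointwise. *)

From Stdlib Require Import Reals Lra List ClassicalEpsilon.
From Coquelicot Require Import Coquelicot.
Open Scope R_scope.

Definition is_gamble {X : Type} (f : X -> R) : Prop :=
  exists M : R, forall x, Rabs (f x) <= M.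

Definition rsum (g : nat -> R) (K : nat) : R :=
  fold_right Rplus 0 (map g (seq 1 K)).

(* Coherence of a lower prevision on the linear space of all is_gamble gambles on X
   (the lower prevision is a total function; only its values on is_gamble gambles matter).
   "sup_x [ ... ] >= 0" of a is_gamble function is written as: for every eps > 0
   some x makes the bracket exceed -eps. *)
Definition coherent_lp {X : Type} (P : (X -> R) -> R) : Prop :=
  forall (m K : nat) (fs : nat -> X -> R),
    (forall k, (k <= K)%nat -> is_gamble (fs k)) ->
    forall eps : R, 0 < eps ->
      exists x : X,
        rsum (fun k => fs k x - P (fs k)) K - INR m * (fs 0%nat x - P (fs 0%nat)) > - eps.

Definition linear_prevision {X : Type} (P : (X -> R) -> R) : Prop :=
  (forall f g, is_gamble f -> is_gamble g -> P (fun x => f x + g x) = P f + P g) /\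
  (forall (c : R) f, is_gamble f -> P (fun x => c * f x) = c * P f) /\
  (forall f, is_gamble f -> (forall x, 0 <= f x) -> 0 <= P f) /\
  P (fun _ => 1) = 1.

Definition credal {X : Type} (lowP : (X -> R) -> R) (P : (X -> R) -> R) : Prop :=
  linear_prevision P /\ (forall f, is_gamble f -> lowP f <= P f).

Definition indic {X : Type} (A : X -> Prop) (x : X) : R :=
  if excluded_middle_informative (A x) then 1 else 0.

Definition Bset {Y T : Type} (y : Y) : Y * T -> Prop := fun z => fst z = y.

Definition countable_set {Y : Type} (S : Y -> Prop) : Prop :=
  exists g : Y -> nat, forall a b, S a -> S b -> g a = g b -> a = b.

(* B-conglomerability, B = {B_y : y in Y}; a countable collection of distinct
   B_y's is indexed by a countable set S of y's; its union is S x T. *)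
Definition conglomerable {Y T : Type} (lowP : (Y * T -> R) -> R) : Prop :=
  forall f : Y * T -> R, is_gamble f ->
  forall S : Y -> Prop, countable_set S ->
    (forall y, S y -> lowP (fun z => indic (Bset y) z * f z) > 0) ->
    lowP (fun z => indic (fun z' : Y * T => S (fst z')) z * f z) >= 0.

(* Generalized Bayes IM Gamma_y(f_y) (value in Rbar; min written as infimum). *)
Definition GenBayes {Y T : Type} (lowP : (Y * T -> R) -> R) (y : Y) (f : Y * T -> R)
  : Rbar :=
  if Rlt_dec 0 (lowP (indic (@Bset Y T y))) then
    Glb_Rbar (fun r => exists P, credal lowP P /\
        r = P (fun z => f z * indic (Bset y) z) / P (indic (Bset y)))
  else Glb_Rbar (fun r => exists th : T, r = f (y, th)).

Definition fHbeta {Y T : Type} (Pi : Y -> (T -> R) -> R) (H : T -> Prop) (beta : R)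
  (z : Y * T) : R :=
  (indic H (snd z) - beta) * (if Rlt_dec beta (Pi (fst z) (indic H)) then 1 else 0).

(* For [y] with [Pi_y(H) > beta], the dominance
   [Pi_y <= Gamma_y] forces the block [B_y = {y} x T] to have positive lower
   probability (otherwise [Gamma_y(H) = inf_theta 1_H(theta) = 0]; the case
   [H = T] is trivial since then [f^{H,beta} >= 0]), and forces the restriction
   of [f^{H,beta}] to [B_y] to have positive lower prevision: otherwise the lower
   envelope theorem yields a dominating linear prevision [P] with
   [P(H | B_y) <= beta].  Coherence allows at most [n] disjoint blocks of lower
   probability above [1/n], so these [y] are countably many, and
   [f^{H,beta}] vanishes outside their blocks; conglomerability concludes.
   The lower envelope theorem is Hahn-Banach, proved by taking (Zorn) a minimal
   sublinear functional below the upper prevision: minimality makes it linear. *)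

From Stdlib Require Import Bool Reals Lra Lia List.
From Stdlib Require Import Classical ClassicalEpsilon FunctionalExtensionality.
From Stdlib Require Cantor.
From Coquelicot Require Import Coquelicot.
From mathcomp Require boolp classical_sets.
Set Bullet Behavior "Strict Subproofs".
Open Scope R_scope.

Lemma is_gamble_add {X} (f g : X -> R) :
  is_gamble f -> is_gamble g -> is_gamble (fun x => f x + g x).
Proof.
  intros [M HM] [N HN]. exists (M + N). intros x.
  eapply Rle_trans; [apply Rabs_triang|]. specialize (HM x); specialize (HN x); lra.
Qed.

Lemma is_gamble_scal {X} (c : R) (f : X -> R) : is_gamble f -> is_gamble (fun x => c * f x).
Proof.
  intros [M HM]. exists (Rabs c * M). intros x. rewrite Rabs_mult.
  apply Rmult_le_compat_l; [apply Rabs_pos | apply HM].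
Qed.

Lemma is_gamble_mul {X} (f g : X -> R) :
  is_gamble f -> is_gamble g -> is_gamble (fun x => f x * g x).
Proof.
  intros [M HM] [N HN]. exists (M * N). intros x. rewrite Rabs_mult.
  apply Rmult_le_compat; auto using Rabs_pos.
Qed.

Lemma is_gamble_opp {X} (f : X -> R) : is_gamble f -> is_gamble (fun x => - f x).
Proof. intros [M HM]. exists M. intros x. rewrite Rabs_Ropp. apply HM. Qed.

Lemma is_gamble_const {X} (c : R) : is_gamble (fun _ : X => c).
Proof. exists (Rabs c). intros _. apply Rle_refl. Qed.

Lemma indic_in {X} (A : X -> Prop) x : A x -> indic A x = 1.
Proof. unfold indic. destruct (excluded_middle_informative (A x)); tauto. Qed.

Lemma indic_notin {X} (A : X -> Prop) x : ~ A x -> indic A x = 0.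
Proof. unfold indic. destruct (excluded_middle_informative (A x)); tauto. Qed.

Lemma indic_bounds {X} (A : X -> Prop) x : 0 <= indic A x <= 1.
Proof. unfold indic. destruct (excluded_middle_informative (A x)); lra. Qed.

Lemma is_gamble_indic {X} (A : X -> Prop) : is_gamble (indic A).
Proof.
  exists 1. intros x. pose proof (indic_bounds A x). rewrite Rabs_right; lra.
Qed.

Definition infR (E : R -> Prop) : R := real (Glb_Rbar E).

Lemma infR_spec (E : R -> Prop) (v0 m : R) :
  E v0 -> (forall v, E v -> m <= v) ->
  (forall v, E v -> infR E <= v) /\
  (forall c, (forall v, E v -> c <= v) -> c <= infR E).
Proof.
  intros Hv0 Hm. destruct (Glb_Rbar_correct E) as [Hlb Hglb].
  assert (Hfin : Glb_Rbar E = Finite (infR E)).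
  { unfold infR. pose proof (Hlb v0 Hv0). pose proof (Hglb m Hm).
    destruct (Glb_Rbar E); simpl in *; tauto. }
  split.
  - intros v Hv. specialize (Hlb v Hv). rewrite Hfin in Hlb. exact Hlb.
  - intros c Hc. specialize (Hglb c Hc). rewrite Hfin in Hglb. exact Hglb.
Qed.

Lemma zorn_premaximal (T : Type) (t0 : T) (le : T -> T -> Prop) :
  (forall t, le t t) -> (forall r s t, le r s -> le s t -> le r t) ->
  (forall A : T -> Prop, (forall s t, A s -> A t -> le s t \/ le t s) ->
     exists t, forall s, A s -> le s t) ->
  exists t, forall s, le t s -> le s t.
Proof.
  intros Hrefl Htrans Hchain.
  assert (Hb : forall s t, boolp.asbool (le s t) = true <-> le s t).
  { intros s t. symmetry. apply reflect_iff, boolp.asboolP. }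
  destruct (@classical_sets.ZL_preorder T t0 (fun s t => boolp.asbool (le s t))) as [t Ht].
  - intros t. apply Hb, Hrefl.
  - intros r s t Hrs Hst. apply Hb in Hrs, Hst. apply Hb. eauto.
  - intros A HA. destruct (Hchain A) as [t Ht].
    + intros s t Hs Htt. destruct (HA s t Hs Htt) as [H | H]; [left | right]; apply Hb, H.
    + exists t. intros s Hs. apply Hb, Ht, Hs.
  - exists t. intros s Hs. apply Hb, Ht, Hb, Hs.
Qed.

Section Sublinear.

Variable X : Type.
Implicit Types (p q : (X -> R) -> R) (a f g : X -> R).

Definition sublinear q : Prop :=
  (forall f g, is_gamble f -> is_gamble g -> q (fun x => f x + g x) <= q f + q g) /\
  (forall t f, 0 <= t -> is_gamble f -> q (fun x => t * f x) = t * q f).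

Definition dominated q p : Prop := forall f, is_gamble f -> q f <= p f.

Lemma sublinear_intro q :
  (forall f g, is_gamble f -> is_gamble g -> q (fun x => f x + g x) <= q f + q g) ->
  (forall t f, 0 < t -> is_gamble f -> q (fun x => t * f x) <= t * q f) ->
  q (fun _ => 0) <= 0 -> sublinear q.
Proof.
  intros Hadd Hhom H0. split; [exact Hadd|]. intros t f Ht Hf.
  destruct (Req_dec t 0) as [-> | Hne].
  - replace (fun x => 0 * f x) with (fun _ : X => 0) by (extensionality x; ring).
    pose proof (Hadd _ _ (is_gamble_const 0) (is_gamble_const 0)) as H.
    cbv beta in H.
    replace (fun _ : X => 0 + 0) with (fun _ : X => 0) in H by (extensionality x; ring).
    lra.
  - apply Rle_antisym; [apply Hhom; [lra | exact Hf]|].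
    pose proof (Hhom (/ t) _ (Rinv_0_lt_compat t ltac:(lra)) (is_gamble_scal t f Hf)) as H.
    cbv beta in H.
    replace (fun x => / t * (t * f x)) with f in H by (extensionality x; field; lra).
    apply Rmult_le_compat_l with (r := t) in H; [|lra].
    rewrite <- Rmult_assoc, Rinv_r, Rmult_1_l in H by lra. exact H.
Qed.

Lemma sublinear_zero q : sublinear q -> q (fun _ => 0) = 0.
Proof.
  intros [_ Hhom]. pose proof (Hhom 0 _ (Rle_refl 0) (is_gamble_const 0)) as H.
  cbv beta in H.
  replace (fun _ : X => 0 * 0) with (fun _ : X => 0) in H by (extensionality x; ring).
  lra.
Qed.

Lemma sublinear_opp_ge q f : sublinear q -> is_gamble f -> 0 <= q f + q (fun x => - f x).
Proof.
  intros Hq Hf. pose proof (proj1 Hq _ _ Hf (is_gamble_opp f Hf)) as H.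
  cbv beta in H.
  replace (fun x => f x + - f x) with (fun _ : X => 0) in H by (extensionality x; ring).
  rewrite sublinear_zero in H by exact Hq. exact H.
Qed.

(* The one-step extension of Hahn-Banach: minimizing [q] along the rays
   [f + t a] keeps it sublinear and pushes its value at [-a] down to [-q a]. *)
Definition shrink q a f : R :=
  infR (fun v => exists t, 0 <= t /\ v = q (fun x => f x + t * a x) - t * q a).

Section Shrink.

Variables (q : (X -> R) -> R) (a : X -> R).
Hypotheses (Hq : sublinear q) (Ha : is_gamble a).

Lemma shrink_spec f : is_gamble f ->
  (forall t, 0 <= t -> shrink q a f <= q (fun x => f x + t * a x) - t * q a) /\
  (forall c, (forall t, 0 <= t -> c <= q (fun x => f x + t * a x) - t * q a) ->
     c <= shrink q a f).
Proof.
  intros Hf.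
  destruct (infR_spec (fun v => exists t, 0 <= t /\ v = q (fun x => f x + t * a x) - t * q a)
              (q (fun x => f x + 0 * a x) - 0 * q a) (- q (fun x => - f x))) as [Hlb Hglb].
  - exists 0. split; [lra | reflexivity].
  - intros v [t [Ht ->]].
    pose proof (proj1 Hq _ _ (is_gamble_add _ _ Hf (is_gamble_scal t a Ha)) (is_gamble_opp f Hf))
      as H.
    cbv beta in H.
    replace (fun x => f x + t * a x + - f x) with (fun x => t * a x) in H
      by (extensionality x; ring).
    rewrite (proj2 Hq t a Ht Ha) in H. lra.
  - split.
    + intros t Ht. apply Hlb. exists t. split; [exact Ht | reflexivity].
    + intros c Hc. apply Hglb. intros v [t [Ht ->]]. apply Hc, Ht.
Qed.

Lemma shrink_le f : is_gamble f -> shrink q a f <= q f.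
Proof.
  intros Hf. pose proof (proj1 (shrink_spec f Hf) 0 (Rle_refl 0)) as H.
  replace (fun x => f x + 0 * a x) with f in H by (extensionality x; ring). lra.
Qed.

Lemma shrink_opp : shrink q a (fun x => - a x) <= - q a.
Proof.
  pose proof (proj1 (shrink_spec _ (is_gamble_opp a Ha)) 1 Rle_0_1) as H.
  cbv beta in H.
  replace (fun x => - a x + 1 * a x) with (fun _ : X => 0) in H by (extensionality x; ring).
  rewrite sublinear_zero in H by exact Hq. lra.
Qed.

Lemma sublinear_shrink : sublinear (shrink q a).
Proof.
  apply sublinear_intro.
  - intros f g Hf Hg.
    destruct (shrink_spec f Hf) as [_ Hglbf]. destruct (shrink_spec g Hg) as [_ Hglbg].
    destruct (shrink_spec _ (is_gamble_add f g Hf Hg)) as [Hlb _].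
    assert (Hsplit : forall s t, 0 <= s -> 0 <= t ->
      shrink q a (fun x => f x + g x) <=
        (q (fun x => f x + s * a x) - s * q a) + (q (fun x => g x + t * a x) - t * q a)).
    { intros s t Hs Ht. pose proof (Hlb (s + t) ltac:(lra)) as H.
      pose proof (proj1 Hq _ _ (is_gamble_add _ _ Hf (is_gamble_scal s a Ha))
                                (is_gamble_add _ _ Hg (is_gamble_scal t a Ha))) as Hsub.
      cbv beta in Hsub.
      replace (fun x => f x + s * a x + (g x + t * a x))
        with (fun x => f x + g x + (s + t) * a x) in Hsub by (extensionality x; ring).
      lra. }
    assert (Hf' : shrink q a (fun x => f x + g x) - shrink q a g <= shrink q a f).
    { apply Hglbf. intros s Hs.
      assert (shrink q a (fun x => f x + g x) - (q (fun x => f x + s * a x) - s * q a)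
                <= shrink q a g) by (apply Hglbg; intros t Ht; pose proof (Hsplit s t Hs Ht); lra).
      lra. }
    lra.
  - intros t f Ht Hf.
    destruct (shrink_spec f Hf) as [_ Hglb].
    destruct (shrink_spec _ (is_gamble_scal t f Hf)) as [Hlb _].
    assert (H : / t * shrink q a (fun x => t * f x) <= shrink q a f).
    { apply Hglb. intros s Hs. pose proof (Hlb (t * s) ltac:(nra)) as H.
      replace (fun x => t * f x + t * s * a x) with (fun x => t * (f x + s * a x)) in H
        by (extensionality x; ring).
      rewrite (proj2 Hq t _ (Rlt_le _ _ Ht) (is_gamble_add _ _ Hf (is_gamble_scal s a Ha))) in H.
      apply Rmult_le_compat_l with (r := / t) in H; [|left; apply Rinv_0_lt_compat, Ht].
      replace (/ t * (t * q (fun x => f x + s * a x) - t * s * q a))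
        with (q (fun x => f x + s * a x) - s * q a) in H by (field; lra).
      exact H. }
    apply Rmult_le_compat_l with (r := t) in H; [|lra].
    rewrite <- Rmult_assoc, Rinv_r, Rmult_1_l in H by lra. exact H.
  - pose proof (proj1 (shrink_spec _ (is_gamble_const 0)) 0 (Rle_refl 0)) as H.
    cbv beta in H.
    replace (fun x : X => 0 + 0 * a x) with (fun _ : X => 0) in H by (extensionality x; ring).
    rewrite (sublinear_zero q Hq) in H. lra.
Qed.

End Shrink.

Lemma minimal_sublinear_odd q : sublinear q ->
  (forall q', sublinear q' -> dominated q' q -> dominated q q') ->
  forall a, is_gamble a -> q (fun x => - a x) = - q a.
Proof.
  intros Hq Hmin a Ha.
  pose proof (Hmin _ (sublinear_shrink q a Hq Ha) (shrink_le q a Hq Ha)) as H.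
  pose proof (H _ (is_gamble_opp a Ha)). pose proof (shrink_opp q a Hq Ha).
  pose proof (sublinear_opp_ge q a Hq Ha). lra.
Qed.

Definition inf_family (F : ((X -> R) -> R) -> Prop) f : R :=
  infR (fun v => exists q, F q /\ v = q f).

Section InfFamily.

Variables (F : ((X -> R) -> R) -> Prop) (p q0 : (X -> R) -> R).
Hypotheses (HF0 : F q0) (HF : forall q, F q -> sublinear q /\ dominated q p)
  (Hdir : forall q1 q2, F q1 -> F q2 -> exists q, F q /\ dominated q q1 /\ dominated q q2).

Lemma inf_family_spec f : is_gamble f ->
  (forall q, F q -> inf_family F f <= q f) /\
  (forall c, (forall q, F q -> c <= q f) -> c <= inf_family F f).
Proof.
  intros Hf.
  destruct (infR_spec (fun v => exists q, F q /\ v = q f) (q0 f) (- p (fun x => - f x)))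
    as [Hlb Hglb].
  - exists q0. split; [exact HF0 | reflexivity].
  - intros v [q [Hq ->]]. destruct (HF q Hq) as [Hsub Hdom].
    pose proof (sublinear_opp_ge q f Hsub Hf). pose proof (Hdom _ (is_gamble_opp f Hf)). lra.
  - split.
    + intros q Hq. apply Hlb. exists q. split; [exact Hq | reflexivity].
    + intros c Hc. apply Hglb. intros v [q [Hq ->]]. apply Hc, Hq.
Qed.

Lemma sublinear_inf_family : sublinear (inf_family F).
Proof.
  apply sublinear_intro.
  - intros f g Hf Hg.
    destruct (inf_family_spec f Hf) as [_ Hglbf]. destruct (inf_family_spec g Hg) as [_ Hglbg].
    destruct (inf_family_spec _ (is_gamble_add f g Hf Hg)) as [Hlb _].
    assert (Hsplit : forall q1 q2, F q1 -> F q2 ->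
      inf_family F (fun x => f x + g x) <= q1 f + q2 g).
    { intros q1 q2 Hq1 Hq2. destruct (Hdir q1 q2 Hq1 Hq2) as [q [Hq [Hd1 Hd2]]].
      pose proof (Hlb q Hq). pose proof (proj1 (proj1 (HF q Hq)) f g Hf Hg).
      pose proof (Hd1 f Hf). pose proof (Hd2 g Hg). lra. }
    assert (inf_family F (fun x => f x + g x) - inf_family F g <= inf_family F f).
    { apply Hglbf. intros q1 Hq1.
      assert (inf_family F (fun x => f x + g x) - q1 f <= inf_family F g)
        by (apply Hglbg; intros q2 Hq2; pose proof (Hsplit q1 q2 Hq1 Hq2); lra).
      lra. }
    lra.
  - intros t f Ht Hf.
    destruct (inf_family_spec f Hf) as [_ Hglb].
    destruct (inf_family_spec _ (is_gamble_scal t f Hf)) as [Hlb _].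
    assert (H : / t * inf_family F (fun x => t * f x) <= inf_family F f).
    { apply Hglb. intros q Hq. pose proof (Hlb q Hq) as H.
      rewrite (proj2 (proj1 (HF q Hq)) t f (Rlt_le _ _ Ht) Hf) in H.
      apply Rmult_le_compat_l with (r := / t) in H; [|left; apply Rinv_0_lt_compat, Ht].
      rewrite <- Rmult_assoc, Rinv_l, Rmult_1_l in H by lra. exact H. }
    apply Rmult_le_compat_l with (r := t) in H; [|lra].
    rewrite <- Rmult_assoc, Rinv_r, Rmult_1_l in H by lra. exact H.
  - pose proof (proj1 (inf_family_spec _ (is_gamble_const 0)) q0 HF0).
    rewrite (sublinear_zero q0 (proj1 (HF q0 HF0))) in H. exact H.
Qed.

End InfFamily.

Theorem hahn_banach_sublinear p h : sublinear p -> is_gamble h ->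
  exists P, sublinear P /\ dominated P p /\
    (forall f, is_gamble f -> P (fun x => - f x) = - P f) /\ P h = p h.
Proof.
  intros Hp Hh.
  set (p0 := shrink p h).
  assert (Hp0 : sublinear p0) by exact (sublinear_shrink p h Hp Hh).
  set (below := fun q => sublinear q /\ dominated q p0).
  set (refines := fun s1 s2 : {q | below q} => dominated (proj1_sig s2) (proj1_sig s1)).
  set (top := exist below p0 (conj Hp0 (fun f _ => Rle_refl (p0 f)))).
  destruct (zorn_premaximal _ top refines) as [[Q [HQ HQp0]] HQmin].
  - intros s f _. apply Rle_refl.
  - intros r s t Hrs Hst f Hf. specialize (Hrs f Hf). specialize (Hst f Hf). lra.
  - intros A Htot.
    set (F := fun q => exists s, (A s \/ s = top) /\ q = proj1_sig s).
    assert (HF : forall q, F q -> sublinear q /\ dominated q p0).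
    { intros q [[q' Hq'] [_ ->]]. exact Hq'. }
    assert (HF0 : F p0) by (exists top; split; [right | ]; reflexivity).
    assert (Hdir : forall q1 q2, F q1 -> F q2 ->
                     exists q, F q /\ dominated q q1 /\ dominated q q2).
    { intros q1 q2 [s1 [Hs1 ->]] [s2 [Hs2 ->]].
      assert (Htop : forall s : {q | below q}, dominated (proj1_sig s) (proj1_sig top))
        by (intros [q Hq] f Hf; exact (proj2 Hq f Hf)).
      destruct Hs1 as [Hs1 | ->]; [destruct Hs2 as [Hs2 | ->]|].
      - destruct (Htot s1 s2 Hs1 Hs2) as [H | H].
        + exists (proj1_sig s2). split; [exists s2; auto|]. split; [exact H | intros f _; lra].
        + exists (proj1_sig s1). split; [exists s1; auto|]. split; [intros f _; lra | exact H].
      - exists (proj1_sig s1). split; [exists s1; auto|]. split; [intros f _; lra | apply Htop].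
      - exists (proj1_sig s2). split; [exists s2; auto|]. split; [apply Htop | intros f _; lra]. }
    assert (Hinf : below (inf_family F))
      by (split; [exact (sublinear_inf_family F p0 p0 HF0 HF Hdir)
                 | intros f Hf; exact (proj1 (inf_family_spec F p0 p0 HF0 HF f Hf) p0 HF0)]).
    exists (exist below (inf_family F) Hinf).
    intros s Hs f Hf. apply (inf_family_spec F p0 p0 HF0 HF f Hf). exists s. auto.
  - assert (Hodd : forall f, is_gamble f -> Q (fun x => - f x) = - Q f).
    { apply minimal_sublinear_odd; [exact HQ|]. intros q' Hq' Hdom.
      assert (Hbelow : below q')
        by (split; [exact Hq' | intros f Hf; pose proof (Hdom f Hf); pose proof (HQp0 f Hf); lra]).
      exact (HQmin (exist below q' Hbelow) Hdom). }
    exists Q. split; [exact HQ|]. split; [|split; [exact Hodd|]].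
    + intros f Hf. pose proof (HQp0 f Hf). pose proof (shrink_le p h Hp Hh f Hf) as Hsh.
      fold p0 in Hsh. lra.
    + pose proof (HQp0 _ (is_gamble_opp h Hh)) as Hopp. rewrite Hodd in Hopp by exact Hh.
      pose proof (shrink_opp p h Hp Hh) as Hsh. fold p0 in Hsh.
      pose proof (HQp0 h Hh). pose proof (shrink_le p h Hp Hh h Hh) as Hle. fold p0 in Hle. lra.
Qed.

End Sublinear.

Lemma eq0_of_abs_le_eps (d : R) : (forall eps, 0 < eps -> Rabs d <= eps) -> d = 0.
Proof.
  intros H. destruct (Req_dec d 0) as [|Hd]; [assumption|].
  pose proof (Rabs_pos_lt d Hd). specialize (H (Rabs d / 2) ltac:(lra)). lra.
Qed.

Lemma nat_ratio_dense (t eps : R) : 0 <= t -> 0 < eps ->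
  exists m n : nat, (0 < n)%nat /\ Rabs (t - INR m / INR n) < eps.
Proof.
  intros Ht He.
  destruct (nfloor_ex (/ eps) (Rlt_le _ _ (Rinv_0_lt_compat _ He))) as [k [_ Hk]].
  set (n := S k).
  assert (Hn : 0 < INR n) by (apply lt_0_INR; unfold n; lia).
  assert (Hinv : / INR n < eps).
  { assert (Hk' : / eps < INR n) by (unfold n; rewrite S_INR; lra).
    apply Rinv_lt_contravar in Hk'.
    - rewrite Rinv_inv in Hk'. exact Hk'.
    - apply Rmult_lt_0_compat; [apply Rinv_0_lt_compat|]; assumption. }
  destruct (nfloor_ex (t * INR n) ltac:(nra)) as [m [Hm1 Hm2]].
  exists m, n. split; [unfold n; lia|].
  assert (Hd : t - INR m / INR n = (t * INR n - INR m) / INR n) by (field; lra).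
  rewrite Hd, Rabs_right.
  - unfold Rdiv. apply Rle_lt_trans with (1 * / INR n); [|lra].
    apply Rmult_le_compat_r; [left; apply Rinv_0_lt_compat, Hn | lra].
  - apply Rle_ge, Rdiv_le_0_compat; lra.
Qed.

Section CoherentLowerPrevision.

Variables (X : Type) (P : (X -> R) -> R).
Hypothesis HP : coherent_lp P.

Lemma coherent_ge_inf f c : is_gamble f -> (forall x, c <= f x) -> c <= P f.
Proof.
  intros Hf Hc. apply Rnot_lt_le. intros Hlt.
  destruct (HP 1%nat 0%nat (fun _ => f) (fun _ _ => Hf) (c - P f)) as [x Hx]; [lra|].
  unfold rsum in Hx; simpl in Hx. specialize (Hc x). lra.
Qed.

Lemma coherent_le_sup f c : is_gamble f -> (forall x, f x <= c) -> P f <= c.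
Proof.
  intros Hf Hc. apply Rnot_lt_le. intros Hlt.
  destruct (HP 0%nat 1%nat (fun _ => f) (fun _ _ => Hf) (P f - c)) as [x Hx]; [lra|].
  unfold rsum in Hx; simpl in Hx. specialize (Hc x). lra.
Qed.

Lemma coherent_superadditive f g : is_gamble f -> is_gamble g ->
  P f + P g <= P (fun x => f x + g x).
Proof.
  intros Hf Hg. apply Rnot_lt_le. intros Hlt.
  set (fs := fun k : nat => match k with 0%nat => fun x => f x + g x | 1%nat => f | _ => g end).
  assert (Hfs : forall k, (k <= 2)%nat -> is_gamble (fs k))
    by (intros [|[|k]] _; simpl; auto using is_gamble_add).
  destruct (HP 1%nat 2%nat fs Hfs (P f + P g - P (fun x => f x + g x))) as [x Hx]; [lra|].
  unfold rsum in Hx; simpl in Hx. lra.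
Qed.

Lemma coherent_natmul f n : is_gamble f -> P (fun x => INR n * f x) = INR n * P f.
Proof.
  intros Hf. apply Rle_antisym.
  - apply Rnot_lt_le. intros Hlt.
    set (fs := fun k : nat => match k with 0%nat => f | _ => fun x => INR n * f x end).
    assert (Hfs : forall k, (k <= 1)%nat -> is_gamble (fs k))
      by (intros [|k] _; simpl; auto using is_gamble_scal).
    destruct (HP n 1%nat fs Hfs (P (fun x => INR n * f x) - INR n * P f)) as [x Hx]; [lra|].
    unfold rsum in Hx; simpl in Hx. lra.
  - induction n as [|n IH].
    + simpl. rewrite Rmult_0_l. apply coherent_ge_inf; [apply is_gamble_scal, Hf|].
      intros x. lra.
    + replace (fun x => INR (S n) * f x) with (fun x => f x + INR n * f x)
        by (extensionality x; rewrite S_INR; ring).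
      pose proof (coherent_superadditive f _ Hf (is_gamble_scal (INR n) f Hf)).
      rewrite S_INR. lra.
Qed.

Lemma coherent_ratmul f m n : is_gamble f -> (0 < n)%nat ->
  P (fun x => INR m / INR n * f x) = INR m / INR n * P f.
Proof.
  intros Hf Hn. assert (Hn' : 0 < INR n) by (apply lt_0_INR, Hn).
  pose proof (coherent_natmul _ n (is_gamble_scal (INR m / INR n) f Hf)) as H.
  cbv beta in H.
  replace (fun x => INR n * (INR m / INR n * f x)) with (fun x => INR m * f x) in H
    by (extensionality x; field; lra).
  rewrite coherent_natmul in H by exact Hf.
  apply Rmult_eq_reg_l with (INR n); [|lra]. rewrite <- H. field. lra.
Qed.

Lemma coherent_scal_lipschitz f M t s : (forall x, Rabs (f x) <= M) ->
  P (fun x => t * f x) <= P (fun x => s * f x) + Rabs (t - s) * M.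
Proof.
  intros HM. assert (Hf : is_gamble f) by (exists M; exact HM).
  pose proof (coherent_superadditive _ _ (is_gamble_scal t f Hf) (is_gamble_scal (s - t) f Hf))
    as H.
  cbv beta in H.
  replace (fun x => t * f x + (s - t) * f x) with (fun x => s * f x) in H
    by (extensionality x; ring).
  assert (- (Rabs (t - s) * M) <= P (fun x => (s - t) * f x)).
  { apply coherent_ge_inf; [apply is_gamble_scal, Hf|]. intros x.
    assert (Rabs ((s - t) * f x) <= Rabs (t - s) * M)
      by (rewrite Rabs_mult, Rabs_minus_sym; apply Rmult_le_compat_l; [apply Rabs_pos | apply HM]).
    apply Rabs_le_between in H0. lra. }
  lra.
Qed.

(* Homogeneity holds for rational factors, and the Lipschitz bound in the
   factor extends it to all nonnegative reals. *)
Lemma coherent_homogeneous f t : is_gamble f -> 0 <= t -> P (fun x => t * f x) = t * P f.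
Proof.
  intros [M HM] Ht. apply Rminus_diag_uniq, eq0_of_abs_le_eps. intros eps He.
  set (C := Rabs M + Rabs (P f) + 1).
  assert (HC : 0 < C) by (unfold C; pose proof (Rabs_pos M); pose proof (Rabs_pos (P f)); lra).
  destruct (nat_ratio_dense t (eps / C) Ht (Rdiv_lt_0_compat _ _ He HC)) as [m [n [Hn Hq]]].
  pose proof (coherent_scal_lipschitz f M t (INR m / INR n) HM) as H1.
  pose proof (coherent_scal_lipschitz f M (INR m / INR n) t HM) as H2.
  rewrite coherent_ratmul in H1, H2 by (try exists M; assumption).
  set (q := INR m / INR n) in *.
  rewrite Rabs_minus_sym in H2.
  assert (HM' : Rabs (t - q) * M <= Rabs (t - q) * Rabs M)
    by (apply Rmult_le_compat_l; [apply Rabs_pos | apply RRle_abs]).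
  assert (HPf : Rabs ((q - t) * P f) <= Rabs (t - q) * Rabs (P f))
    by (rewrite Rabs_mult, Rabs_minus_sym; lra).
  apply Rabs_le_between in HPf.
  assert (Hsmall : Rabs (t - q) * C <= eps).
  { apply Rmult_lt_compat_r with (r := C) in Hq; [|exact HC].
    unfold Rdiv in Hq. rewrite Rmult_assoc, Rinv_l, Rmult_1_r in Hq by lra. lra. }
  apply Rabs_le. unfold C in Hsmall. pose proof (Rabs_pos (t - q)). nra.
Qed.

Lemma sublinear_conjugate : sublinear X (fun f => - P (fun x => - f x)).
Proof.
  split.
  - intros f g Hf Hg.
    pose proof (coherent_superadditive _ _ (is_gamble_opp f Hf) (is_gamble_opp g Hg)) as H.
    cbv beta in H.
    replace (fun x => - f x + - g x) with (fun x => - (f x + g x)) in H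
      by (extensionality x; ring).
    lra.
  - intros t f Ht Hf.
    replace (fun x => - (t * f x)) with (fun x => t * - f x) by (extensionality x; ring).
    rewrite coherent_homogeneous by (assumption || apply is_gamble_opp, Hf). ring.
Qed.

End CoherentLowerPrevision.

Theorem lower_envelope_attained {X} (lowP : (X -> R) -> R) g :
  coherent_lp lowP -> is_gamble g -> exists P, credal lowP P /\ P g = lowP g.
Proof.
  intros Hc Hg.
  set (upP := fun f => - lowP (fun x => - f x)).
  destruct (hahn_banach_sublinear X upP (fun x => - g x) (sublinear_conjugate X lowP Hc)
              (is_gamble_opp g Hg)) as [P [HPsub [HPdom [Hodd HPg]]]].
  assert (Hlow : forall f, is_gamble f -> lowP f <= P f).
  { intros f Hf. pose proof (HPdom _ (is_gamble_opp f Hf)) as H.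
    rewrite Hodd in H by exact Hf. unfold upP in H.
    replace (fun x => - - f x) with f in H by (extensionality x; ring). lra. }
  exists P. split; [split; [split; [|split; [|split]]|]|].
  - intros f h Hf Hh. apply Rle_antisym; [exact (proj1 HPsub f h Hf Hh)|].
    pose proof (proj1 HPsub _ _ (is_gamble_opp f Hf) (is_gamble_opp h Hh)) as H.
    cbv beta in H.
    replace (fun x => - f x + - h x) with (fun x => - (f x + h x)) in H
      by (extensionality x; ring).
    rewrite !Hodd in H by (auto using is_gamble_add). lra.
  - intros c f Hf. destruct (Rle_lt_dec 0 c) as [Hc0 | Hc0].
    + exact (proj2 HPsub c f Hc0 Hf).
    + replace (fun x => c * f x) with (fun x => - (- c * f x)) by (extensionality x; ring).
      rewrite Hodd, (proj2 HPsub (- c) f) by (auto using is_gamble_scal; lra). ring.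
  - intros f Hf Hpos. pose proof (coherent_ge_inf X lowP Hc f 0 Hf Hpos).
    pose proof (Hlow f Hf). lra.
  - pose proof (Hlow _ (is_gamble_const 1)) as Hge.
    pose proof (coherent_ge_inf X lowP Hc (fun _ => 1) 1 (is_gamble_const 1)
                  (fun _ => Rle_refl 1)) as Hone.
    pose proof (HPdom _ (is_gamble_const 1)) as Hle. unfold upP in Hle. cbv beta in Hle.
    pose proof (coherent_ge_inf X lowP Hc (fun _ => Ropp 1) (Ropp 1)
                  (is_gamble_const (Ropp 1)) (fun _ => Rle_refl (Ropp 1))) as Hmone.
    lra.
  - exact Hlow.
  - rewrite Hodd in HPg by exact Hg. unfold upP in HPg.
    replace (fun x => - - g x) with g in HPg by (extensionality x; ring). lra.
Qed.

Lemma countable_set_of_lists {Y} (S : Y -> Prop) (L : nat -> list Y) :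
  (forall y, S y -> exists n, In y (L n)) -> countable_set S.
Proof.
  intros HL.
  set (loc := fun y => epsilon (inhabits (0%nat, 0%nat))
                         (fun nk => nth_error (L (fst nk)) (snd nk) = Some y)).
  assert (Hloc : forall y, S y -> nth_error (L (fst (loc y))) (snd (loc y)) = Some y).
  { intros y Hy. apply (epsilon_spec (inhabits (0%nat, 0%nat))
                          (fun nk => nth_error (L (fst nk)) (snd nk) = Some y)).
    destruct (HL y Hy) as [n Hn]. destruct (In_nth_error _ _ Hn) as [k Hk].
    exists (n, k). exact Hk. }
  exists (fun y => Cantor.to_nat (loc y)). intros a b Ha Hb Hab.
  apply (f_equal Cantor.of_nat) in Hab. rewrite !Cantor.cancel_of_to in Hab.
  pose proof (Hloc a Ha) as Ea. rewrite Hab, (Hloc b Hb) in Ea. congruence.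
Qed.

Lemma nodup_bounded_covered {Y} (A : Y -> Prop) (N : nat) :
  (forall l, NoDup l -> (forall y, In y l -> A y) -> (length l <= N)%nat) ->
  exists l, forall y, A y -> In y l.
Proof.
  intros Hbound.
  assert (Hgrow : forall k, (exists l, NoDup l /\ (forall y, In y l -> A y) /\ length l = k) \/
                            (exists l, forall y, A y -> In y l)).
  { induction k as [|k [[l [Hl [HA Hlen]]] | Hcov]].
    - left. exists nil. split; [constructor|]. split; [intros y []|reflexivity].
    - destruct (classic (forall y, A y -> In y l)) as [Hcov | Hout]; [right; exists l; exact Hcov|].
      apply not_all_ex_not in Hout as [y Hy]. apply imply_to_and in Hy as [Hy Hnot].
      left. exists (y :: l). split; [constructor; assumption|].
      split; [intros z [<- | Hz]; auto | simpl; lia].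
    - right. exact Hcov. }
  destruct (Hgrow (S N)) as [[l [Hl [HA Hlen]]] | Hcov]; [|exact Hcov].
  specialize (Hbound l Hl HA). lia.
Qed.

Section Blocks.

Variables (Y T : Type) (lowP : (Y * T -> R) -> R).
Hypothesis Hc : coherent_lp lowP.

Lemma indic_blocks_cons (a : Y) (l : list Y) : ~ In a l ->
  indic (fun z : Y * T => In (fst z) (a :: l)) =
  (fun z => indic (Bset a) z + indic (fun z : Y * T => In (fst z) l) z).
Proof.
  intros Ha. extensionality z.
  destruct (classic (fst z = a)) as [Hz | Hz].
  - assert (Hzl : ~ In (fst z) l) by (rewrite Hz; exact Ha).
    rewrite (indic_in _ z), (indic_in (Bset a) z), (indic_notin _ z Hzl);
      [ring | exact Hz | left; symmetry; exact Hz].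
  - assert (Hza : ~ Bset a z) by exact Hz.
    destruct (classic (In (fst z) l)) as [Hl | Hl].
    + rewrite (indic_in _ z), (indic_notin _ z Hza), (indic_in _ z Hl); [ring | right; exact Hl].
    + rewrite (indic_notin _ z), (indic_notin _ z Hza), (indic_notin _ z Hl);
        [ring | intros [H | H]; auto].
Qed.

(* Superadditivity, as the indicators of distinct blocks sum to at most 1. *)
Lemma length_heavy_blocks (l : list Y) (c : R) : NoDup l ->
  (forall y, In y l -> c <= lowP (indic (@Bset Y T y))) -> INR (length l) * c <= 1.
Proof.
  intros Hl Hheavy.
  assert (Hsum : INR (length l) * c <= lowP (indic (fun z : Y * T => In (fst z) l))).
  { induction l as [|a l IH].
    - simpl. rewrite Rmult_0_l. apply coherent_ge_inf; [exact Hc | apply is_gamble_indic|].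
      intros z. apply indic_bounds.
    - inversion Hl as [|a' l' Ha Hl']; subst.
      rewrite indic_blocks_cons by exact Ha.
      pose proof (coherent_superadditive _ lowP Hc _ _ (is_gamble_indic (Bset a))
                    (is_gamble_indic (fun z : Y * T => In (fst z) l))).
      pose proof (IH Hl' (fun y Hy => Hheavy y (or_intror Hy))).
      pose proof (Hheavy a (or_introl eq_refl)).
      simpl length. rewrite S_INR. lra. }
  pose proof (coherent_le_sup _ lowP Hc _ 1 (is_gamble_indic (fun z : Y * T => In (fst z) l))
                (fun z => proj2 (indic_bounds _ z))).
  lra.
Qed.

Lemma heavy_blocks_finite (c : R) : 0 < c ->
  exists l, forall y, c < lowP (indic (@Bset Y T y)) -> In y l.
Proof.
  intros Hcpos.
  destruct (nfloor_ex (/ c) (Rlt_le _ _ (Rinv_0_lt_compat _ Hcpos))) as [N [_ HN]].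
  apply (nodup_bounded_covered _ N). intros l Hl Hheavy.
  pose proof (length_heavy_blocks l c Hl (fun y Hy => Rlt_le _ _ (Hheavy y Hy))) as H.
  apply Rmult_le_compat_r with (r := / c) in H; [|left; apply Rinv_0_lt_compat, Hcpos].
  rewrite Rmult_assoc, Rinv_r, Rmult_1_r, Rmult_1_l in H by lra.
  apply Nat.lt_succ_r, INR_lt. rewrite S_INR. lra.
Qed.

Lemma countable_of_positive_blocks (A : Y -> Prop) :
  (forall y, A y -> 0 < lowP (indic (@Bset Y T y))) -> countable_set A.
Proof.
  intros Hpos.
  destruct (choice (fun (n : nat) (l : list Y) =>
              forall y, / INR (S n) < lowP (indic (@Bset Y T y)) -> In y l)) as [L HL].
  { intros n. apply heavy_blocks_finite, Rinv_0_lt_compat, lt_0_INR. lia. }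
  apply (countable_set_of_lists A L). intros y Hy.
  set (v := lowP (indic (@Bset Y T y))).
  assert (Hv : 0 < v) by exact (Hpos y Hy).
  destruct (nfloor_ex (/ v) (Rlt_le _ _ (Rinv_0_lt_compat _ Hv))) as [n [_ Hn]].
  exists n. apply HL. fold v. rewrite <- (Rinv_inv v).
  apply Rinv_lt_contravar; [|rewrite S_INR; exact Hn].
  apply Rmult_lt_0_compat; [apply Rinv_0_lt_compat, Hv | apply lt_0_INR; lia].
Qed.

End Blocks.

Lemma GenBayes_le_value {Y T} (lowP : (Y * T -> R) -> R) y (f : Y * T -> R) th :
  ~ 0 < lowP (indic (@Bset Y T y)) -> Rbar_le (GenBayes lowP y f) (f (y, th)).
Proof.
  intros Hnull. unfold GenBayes.
  destruct (Rlt_dec 0 (lowP (indic (Bset y)))) as [Hpos | _]; [contradiction|].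
  apply Glb_Rbar_correct. exists th. reflexivity.
Qed.

Lemma GenBayes_le_ratio {Y T} (lowP : (Y * T -> R) -> R) y (f : Y * T -> R) P :
  0 < lowP (indic (@Bset Y T y)) -> credal lowP P ->
  Rbar_le (GenBayes lowP y f) (P (fun z => f z * indic (Bset y) z) / P (indic (Bset y))).
Proof.
  intros Hpos HP. unfold GenBayes.
  destruct (Rlt_dec 0 (lowP (indic (Bset y)))) as [_ | Hnull]; [|contradiction].
  apply Glb_Rbar_correct. exists P. split; [exact HP | reflexivity].
Qed.

Lemma credal_ratio_le {X} (lowP : (X -> R) -> R) (num den : X -> R) (beta : R) :
  coherent_lp lowP -> is_gamble num -> is_gamble den -> 0 < lowP den ->
  lowP (fun x => num x + - beta * den x) <= 0 ->
  exists P, credal lowP P /\ P num / P den <= beta.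
Proof.
  intros Hc Hnum Hden Hpos Hneg.
  destruct (lower_envelope_attained lowP _ Hc
              (is_gamble_add _ _ Hnum (is_gamble_scal (- beta) den Hden)))
    as [P [HP HPg]].
  exists P. split; [exact HP|].
  destruct HP as [[Hadd [Hscal _]] Hdom].
  rewrite Hadd, Hscal in HPg by auto using is_gamble_scal.
  pose proof (Hdom den Hden).
  apply Rle_div_l; lra.
Qed.

Section Invulnerability.

Variables (Y T : Type) (lowP : (Y * T -> R) -> R) (Pi : Y -> (T -> R) -> R).
Variables (H : T -> Prop) (beta : R).

Let credible y := beta < Pi y (indic H).

Lemma is_gamble_fHbeta : is_gamble (fHbeta Pi H beta).
Proof.
  exists (1 + Rabs beta). intros z. unfold fHbeta.
  pose proof (indic_bounds H (snd z)). pose proof (Rabs_pos beta).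
  destruct (Rlt_dec beta (Pi (fst z) (indic H))); rewrite ?Rmult_0_r, ?Rmult_1_r, ?Rabs_R0;
    [|lra].
  eapply Rle_trans; [apply Rabs_triang|]. rewrite Rabs_Ropp, Rabs_right; lra.
Qed.

Lemma fHbeta_nonneg : (forall th, H th) -> beta <= 1 -> forall z, 0 <= fHbeta Pi H beta z.
Proof.
  intros Hfull Hbeta z. unfold fHbeta. rewrite indic_in by apply Hfull.
  destruct (Rlt_dec beta (Pi (fst z) (indic H))); lra.
Qed.

Lemma fHbeta_on_credible_block y : credible y ->
  (fun z => indic (Bset y) z * fHbeta Pi H beta z) =
  (fun z => indic H (snd z) * indic (Bset y) z + - beta * indic (Bset y) z).
Proof.
  intros Hy. extensionality z. unfold fHbeta.
  destruct (classic (Bset y z)) as [Hz | Hz].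
  - rewrite indic_in by exact Hz. unfold Bset in Hz. rewrite Hz.
    destruct (Rlt_dec beta (Pi y (indic H))) as [_ | Hn]; [ring | contradiction].
  - rewrite indic_notin by exact Hz. ring.
Qed.

Lemma fHbeta_supported :
  (fun z => indic (fun z' : Y * T => credible (fst z')) z * fHbeta Pi H beta z) =
  fHbeta Pi H beta.
Proof.
  extensionality z. destruct (classic (credible (fst z))) as [Hz | Hz].
  - rewrite indic_in by exact Hz. ring.
  - rewrite indic_notin by exact Hz. unfold fHbeta.
    destruct (Rlt_dec beta (Pi (fst z) (indic H))); [contradiction | ring].
Qed.

Hypothesis Hc : coherent_lp lowP.
Hypothesis Hdom : forall y, Rbar_le (Pi y (indic H)) (GenBayes lowP y (fun z => indic H (snd z))).

Lemma credible_block_mass_pos y : 0 <= beta -> ~ (forall th, H th) -> credible y ->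
  0 < lowP (indic (@Bset Y T y)).
Proof.
  intros Hbeta Hpartial Hy. apply NNPP. intros Hnull.
  apply not_all_ex_not in Hpartial as [th Hth].
  pose proof (Rbar_le_trans _ _ _ (Hdom y) (GenBayes_le_value lowP y _ th Hnull)) as Hle.
  simpl in Hle. rewrite indic_notin in Hle by exact Hth. unfold credible in Hy. lra.
Qed.

Lemma credible_block_gain_pos y : 0 < lowP (indic (@Bset Y T y)) -> credible y ->
  0 < lowP (fun z => indic (Bset y) z * fHbeta Pi H beta z).
Proof.
  intros Hpos Hy. apply Rnot_le_lt. intros Hneg.
  rewrite fHbeta_on_credible_block in Hneg by exact Hy.
  destruct (credal_ratio_le lowP (fun z => indic H (snd z) * indic (Bset y) z) _ beta Hc
              (is_gamble_mul _ _ (is_gamble_indic (fun z : Y * T => H (snd z)))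
                                 (is_gamble_indic (Bset y)))
              (is_gamble_indic (Bset y)) Hpos Hneg) as [P [HP Hratio]].
  pose proof (Rbar_le_trans _ _ _ (Hdom y) (GenBayes_le_ratio lowP y _ P Hpos HP)) as Hle.
  simpl in Hle. unfold credible in Hy. lra.
Qed.

End Invulnerability.

Theorem proposition1 (Y T : Type) (lowP : (Y * T -> R) -> R)
  (Pi : Y -> (T -> R) -> R) :
  coherent_lp lowP ->
  conglomerable lowP ->
  (forall y, coherent_lp (Pi y)) ->
  (forall (y : Y) (f : Y * T -> R), is_gamble f ->
     Rbar_le (Finite (Pi y (fun th => f (y, th)))) (GenBayes lowP y f)) ->
  forall (H : T -> Prop) (beta : R), 0 <= beta <= 1 ->
    lowP (fHbeta Pi H beta) >= 0.
Proof.
  intros Hc Hcong _ HGB H beta Hbeta. apply Rle_ge.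
  assert (Hdom : forall y, Rbar_le (Pi y (indic H)) (GenBayes lowP y (fun z => indic H (snd z))))
    by (intros y; exact (HGB y _ (is_gamble_indic (fun z : Y * T => H (snd z))))).
  destruct (classic (forall th, H th)) as [Hfull | Hpartial].
  - apply coherent_ge_inf; [exact Hc | apply is_gamble_fHbeta|].
    apply fHbeta_nonneg; [exact Hfull | lra].
  - set (credible := fun y => beta < Pi y (indic H)).
    assert (Hmass : forall y, credible y -> 0 < lowP (indic (@Bset Y T y)))
      by (intros y; exact (credible_block_mass_pos Y T lowP Pi H beta Hdom y
                             (proj1 Hbeta) Hpartial)).
    pose proof (Hcong _ (is_gamble_fHbeta Y T Pi H beta) credible
                  (countable_of_positive_blocks Y T lowP Hc credible Hmass)
                  (fun y Hy => credible_block_gain_pos Y T lowP Pi H beta Hc Hdom y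
                                 (Hmass y Hy) Hy)) as Hcg.
    unfold credible in Hcg. cbv beta in Hcg.
    rewrite (fHbeta_supported Y T Pi H beta) in Hcg. lra.
Qed.
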